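(* Assume $D$ is irreducible with invariant distribution $\pi$. Then for every $m\ge1$ the steady-state binomial moment satisfies $$B_m\le\sum_{\substack{l_1+\cdots+l_k=m\\ l_1,\dots,l_k\ge1}}\frac{1}{\delta^k\,l_1(l_1+l_2)\cdots(l_1+l_2+\cdots+l_k)}\prod_{i=1}^k\lVert C_{l_i}\rVert_\infty .$$
   Context: Standing model. Fix $N\ge1$, $\delta>0$; rates $a_{i,j}\ge0$ ($i\ne j$) and $b^{[r]}_{i,j}\ge0$ ($r\ge1$) with $\sum_r r^pb^{[r]}_{i,j}<\infty$ for all $p$. $D_r:=(b^{[r]}_{i,j})$; $D_0$ has off-diagonal entries $a_{i,j}$ and diagonal $a_{i,i}:=-\sum_{k\ne i}a_{i,k}-\sum_k\sum_rb^{[r]}_{i,k}$; $D:=D_0+\sum_{r\ge1}D_r$; $C_r:=\sum_{n\ge r}\binom nrD_n$. For the Markov chain $(S(t),M(t))$ on $\{1,\dots,N\}\times\mathbb N$ with jumps $(i,m)\to(j,m)$ at rate $a_{i,j}$, $(i,m)\to(j,m+r)$ at rate $b^{[r]}_{i,j}$, $(i,m)\to(i,m-1)$ at rate $m\delta$, let $\mathbb P_{i,j}(m;t)=\Pr(S(t)=j,M(t)=m\mid S(0)=i,M(0)=0)$, $[\mathcal B_m(t)]_{i,j}=\sum_{n\ge m}\binom nm\mathbb P_{i,j}(n;t)$, and $B_m:=\lim_{t\to\infty}\pi^\top\mathcal B_m(t)\mathbf 1$. Equivalently $B_m=\sum_{l_1+\cdots+l_k=m}\frac1{m\delta}\pi^\top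 C_{l_1}(l_1\delta I-D)^{-1}C_{l_2}\cdots[(l_1+\cdots+l_{k-1})\delta I-D]^{-1}C_{l_k}\mathbf 1$. $\lVert\cdot\rVert_\infty$ is the matrix norm induced by the vector max-norm (maximum absolute row sum). Sums over ''$l_1+\cdots+l_k=m$'' range over all $k\ge1$ and ordered compositions of $m$ into positive parts. *)

From HB Require Import structures.
From mathcomp Require Import all_boot all_order all_algebra.
From mathcomp Require Import all_classical all_reals all_analysis.
Set Implicit Arguments. Unset Strict Implicit. Unset Printing Implicit Defensive.
Import Order.TTheory GRing.Theory Num.Theory.
Local Open Scope ring_scope.

Section Model.
Variables (R : realType) (N : nat).
Variable (a : 'I_N -> 'I_N -> R).      (* a i j, used for i <> j *)
Variable (b : nat -> 'I_N -> 'I_N -> R). (* b r i j = b^{[r]}_{i,j}, used for r >= 1 *)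

Definition rsum_from (m : nat) (u : nat -> R) : R :=
  limn (fun n => \sum_(m <= k < n) u k).

Definition Dr (r : nat) : 'M[R]_N := \matrix_(i, j) b r i j.

Definition D0 : 'M[R]_N := \matrix_(i, j)
  if i == j then
    - (\sum_(k < N | k != i) a i k) - \sum_(k < N) rsum_from 1 (fun r => b r i k)
  else a i j.

Definition Dgen : 'M[R]_N :=
  D0 + \matrix_(i, j) rsum_from 1 (fun r => b r i j).

Definition Cmat (r : nat) : 'M[R]_N :=
  \matrix_(i, j) rsum_from r (fun n => 'C(n, r)%:R * b n i j).

(* C_{l_1} (l_1 d I - D)^{-1} C_{l_2} ... [(l_1+...+l_{k-1}) d I - D]^{-1} C_{l_k},
   with acc = sum of the parts already consumed *)
Fixpoint chain (delta : R) (acc : nat) (s : seq nat) : 'M[R]_N :=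
  match s with
  | [::] => 1%:M
  | l :: s' =>
      match s' with
      | [::] => Cmat l
      | _ => Cmat l *m invmx (((acc + l)%:R * delta)%:M - Dgen)
                 *m chain delta (acc + l) s'
      end
  end.

End Model.

Fixpoint comps_aux (fuel n : nat) : seq (seq nat) :=
  if n == 0%N then [:: [::]] else
  match fuel with
  | 0 => [::]
  | f.+1 => flatten [seq map (cons l) (comps_aux f (n - l)) | l <- iota 1 n]
  end.

Definition compositions (m : nat) : seq (seq nat) := comps_aux m m.

Definition Bmoment (R : realType) (N : nat) (a : 'I_N -> 'I_N -> R)
  (b : nat -> 'I_N -> 'I_N -> R) (delta : R) (pi : 'rV[R]_N) (m : nat) : R :=
  \sum_(s <- compositions m)
     (m%:R * delta)^-1 * (pi *m chain a b delta 0 s *m (const_mx 1 : 'cV[R]_N)) 0 0.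

Definition norm_inf (R : realType) (N : nat) (A : 'M[R]_N) : R :=
  \big[Num.max/0]_(i < N) \sum_(j < N) `|A i j|.

Definition irreducible_gen (R : realType) (N : nat) (Q : 'M[R]_N) : Prop :=
  forall i j : 'I_N, connect (fun x y => (x != y) && (0 < Q x y)) i j.

Definition invariant_dist (R : realType) (N : nat) (Q : 'M[R]_N) (pi : 'rV[R]_N) : Prop :=
  (forall i, 0 <= pi 0 i) /\ \sum_(i < N) pi 0 i = 1 /\ pi *m Q = 0.

From HB Require Import structures.
From mathcomp Require Import all_boot all_order all_algebra.
From mathcomp Require Import all_classical all_reals all_analysis.
From mathcomp Require Import ring.

Set Implicit Arguments.
Unset Strict Implicit.
Unset Printing Implicit Defensive.
Import Order.TTheory GRing.Theory Num.Theory.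
Local Open Scope ring_scope.

(* Every summand of B_m has the form pi^T M 1 / (m delta), and pi^T M 1 <= ||M||_oo
   because pi is a probability vector.  The norm is submultiplicative, and since D is nonnegative off the
   diagonal with zero row sums, a maximum principle at the largest entry of x gives
   c ||x||_oo <= ||(c I - D) x||_oo, hence ||(c I - D)^-1||_oo <= 1/c for c > 0.
   Taking c = (l_1 + ... + l_j) delta bounds the j-th resolvent of the chain, and
   the prefactor 1/(m delta) supplies the last factor since m = l_1 + ... + l_k. *)

Section NormInf.
Variables (R : realType) (N : nat).
Implicit Types A B : 'M[R]_N.

Lemma norm_inf_ge0 A : 0 <= norm_inf A.
Proof.
apply: (big_ind (fun x => 0 <= x)) => // [x y x0 y0|i _].
  by rewrite le_max x0.
exact: sumr_ge0.
Qed.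

Lemma row_norm_le_norm_inf A i : \sum_j `|A i j| <= norm_inf A.
Proof. exact: le_bigmax. Qed.

Lemma norm_inf_le A c :
  0 <= c -> (forall i, \sum_j `|A i j| <= c) -> norm_inf A <= c.
Proof. by move=> c0 rowA; apply: bigmax_le. Qed.

Lemma norm_inf_mulmx A B : norm_inf (A *m B) <= norm_inf A * norm_inf B.
Proof.
apply: norm_inf_le => [|i]; first by rewrite mulr_ge0 ?norm_inf_ge0.
apply: (@le_trans _ _ (\sum_j \sum_k `|A i k| * `|B k j|)).
  apply: ler_sum => j _; rewrite mxE; apply: le_trans (ler_norm_sum _ _ _) _.
  by apply: ler_sum => k _; rewrite normrM.
rewrite exchange_big /=.
apply: (@le_trans _ _ (\sum_k `|A i k| * norm_inf B)).
  by apply: ler_sum => k _; rewrite -mulr_sumr ler_wpM2l ?row_norm_le_norm_inf.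
by rewrite -mulr_suml ler_wpM2r ?norm_inf_ge0 ?row_norm_le_norm_inf.
Qed.

Lemma prob_mulmx_ones_le_norm_inf (p : 'rV[R]_N) A :
  (forall i, 0 <= p 0 i) -> \sum_i p 0 i = 1 ->
  (p *m A *m (const_mx 1 : 'cV[R]_N)) 0 0 <= norm_inf A.
Proof.
move=> p_ge0 p_sum1; rewrite -mulmxA mxE.
apply: (@le_trans _ _ (\sum_i p 0 i * norm_inf A)); last first.
  by rewrite -mulr_suml p_sum1 mul1r.
apply: ler_sum => i _; rewrite ler_wpM2l // mxE.
apply: le_trans (ler_norm _) _; apply: le_trans (ler_norm_sum _ _ _) _.
apply: le_trans (row_norm_le_norm_inf A i).
by apply: ler_sum => j _; rewrite mxE mulr1.
Qed.

End NormInf.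

Section Resolvent.
Variables (R : realType) (N : nat) (Q : 'M[R]_N) (c : R).
Hypothesis Q_offdiag_ge0 : forall i j, i != j -> 0 <= Q i j.
Hypothesis Q_rowsum_le0 : forall i, \sum_j Q i j <= 0.
Hypothesis c_gt0 : 0 < c.

Local Notation A := (c%:M - Q).

Lemma resolvent_at_argmax {x : 'cV[R]_N} {i : 'I_N} :
  (forall j, `|x j 0| <= `|x i 0|) -> c * `|x i 0| <= `|(A *m x) i 0|.
Proof.
move=> xi_max; set xi := x i 0.
have xi2_ge0 : 0 <= xi * xi by rewrite -expr2 sqr_ge0.
have Q_cross : \sum_j Q i j * (xi * x j 0) <= 0.
  apply: le_trans (_ : \sum_j Q i j * (xi * xi) <= 0); last first.
    by rewrite -mulr_suml mulr_le0_ge0.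
  apply: ler_sum => j _; have [<-|ij] := eqVneq i j; first by [].
  rewrite ler_wpM2l ?Q_offdiag_ge0 //; apply: le_trans (ler_norm _) _.
  by rewrite normrM -[xi * xi]ger0_norm // normrM ler_wpM2l.
have sq_le : c * (xi * xi) <= xi * (A *m x) i 0.
  rewrite mulmxBl mul_scalar_mx !mxE mulrBr mulrCA lerBrDr gerDl big_distrr /=.
  by under eq_bigr do rewrite mulrCA.
have [->|xi_neq0] := eqVneq xi 0; first by rewrite normr0 mulr0.
rewrite -(@ler_pM2r _ `|xi|) ?normr_gt0 // -mulrA -normrM ger0_norm //.
by apply: le_trans sq_le _; rewrite mulrC -normrM ler_norm.
Qed.

Lemma resolvent_max_principle (x : 'cV[R]_N) k :
  exists i, c * `|x k 0| <= `|(A *m x) i 0|.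
Proof.
have [i _ xi_max] := @arg_maxP _ _ _ k xpredT (fun i => `|x i 0|) isT.
exists i; apply: le_trans _ (resolvent_at_argmax (fun j => xi_max j isT)).
by rewrite ler_pM2l //; apply: xi_max.
Qed.

Lemma resolvent_unit : A \in unitmx.
Proof.
rewrite unitmxE unitfE -det_tr; apply/negP => /det0P[v /negP v_neq0 vA0].
have Av0 : A *m v^T = 0 by rewrite -[A]trmxK -trmx_mul vA0 trmx0.
apply: v_neq0; apply/eqP/matrixP => p k; rewrite (ord1 p) mxE.
have [i] := resolvent_max_principle v^T k; rewrite Av0 !mxE normr0.
by rewrite pmulr_rle0 // normr_le0 => /eqP.
Qed.

Lemma norm_inf_resolvent : norm_inf (invmx A) <= c^-1.
Proof.
apply: norm_inf_le => [|i]; first by rewrite invr_ge0 ltW.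
set X := invmx A; pose y : 'cV[R]_N := \col_j Num.sg (X i j).
have Xy_i : (X *m y) i 0 = \sum_j `|X i j|.
  by rewrite mxE; apply: eq_bigr => j _; rewrite mxE normrEsg mulrC.
have [k] := resolvent_max_principle (X *m y) i.
rewrite mulmxA mulmxV ?resolvent_unit // mul1mx Xy_i ger0_norm ?sumr_ge0 //.
rewrite -ler_pdivlMl // => le_sum; apply: le_trans le_sum _.
by rewrite ger_pMr ?invr_gt0 // mxE normr_sg; case: (_ != 0).
Qed.

End Resolvent.

Section Generator.
Variables (R : realType) (N : nat).
Variables (a : 'I_N -> 'I_N -> R) (b : nat -> 'I_N -> 'I_N -> R).
Hypothesis a_ge0 : forall i j, i != j -> 0 <= a i j.
Hypothesis b_ge0 : forall r i j, (0 < r)%N -> 0 <= b r i j.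
Hypothesis b_summable : forall i j, cvgn (fun n => \sum_(1 <= r < n) b r i j).

Lemma rsum_from_b_ge0 i j : 0 <= rsum_from 1 (fun r => b r i j).
Proof.
apply: limr_ge; first exact: b_summable.
apply: nearW => n; rewrite big_nat_cond.
by apply: sumr_ge0 => r /andP[/andP[r_gt0 _] _]; apply: b_ge0.
Qed.

Lemma Dgen_offdiag_ge0 i j : i != j -> 0 <= Dgen a b i j.
Proof. by move=> ij; rewrite !mxE (negbTE ij) addr_ge0 ?a_ge0 ?rsum_from_b_ge0. Qed.

Lemma Dgen_rowsum i : \sum_j Dgen a b i j = 0.
Proof.
under eq_bigr do rewrite !mxE.
rewrite big_split /= (bigD1 i) //= eqxx.
rewrite [X in _ + X + _](eq_bigr (a i)) => [|j ji]; last by rewrite eq_sym (negbTE ji).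
by rewrite addrAC subrK addNr.
Qed.

End Generator.

Section Chain.
Variables (R : realType) (N : nat) (delta : R).
Variables (a : 'I_N -> 'I_N -> R) (b : nat -> 'I_N -> 'I_N -> R).

Definition chain_bound (acc : nat) (s : seq nat) : R :=
  (\prod_(l <- s) norm_inf (Cmat b l)) /
  (delta ^+ size s * \prod_(j < size s) (acc + sumn (take j.+1 s))%:R).

Lemma chain_bound_cons acc l s :
  chain_bound acc (l :: s) =
  norm_inf (Cmat b l) * ((acc + l)%:R * delta)^-1 * chain_bound (acc + l) s.
Proof.
rewrite /chain_bound big_cons /= big_ord_recl /= take0 addn0 exprS.
under [X in _ / (_ * (_ * X))]eq_bigr => j _ do rewrite /bump leq0n addnA.
rewrite !invfM; ring.
Qed.

Hypothesis delta_gt0 : 0 < delta.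
Hypothesis a_ge0 : forall i j, i != j -> 0 <= a i j.
Hypothesis b_ge0 : forall r i j, (0 < r)%N -> 0 <= b r i j.
Hypothesis b_summable : forall i j, cvgn (fun n => \sum_(1 <= r < n) b r i j).

Lemma norm_inf_chain acc s : all (fun l => 0 < l)%N s -> s != [::] ->
  norm_inf (chain a b delta acc s) <=
  (acc + sumn s)%:R * delta * chain_bound acc s.
Proof.
elim: s acc => [//|l s IHs] acc /= /andP[l_gt0 s_pos] _.
have accl_delta_gt0 : 0 < (acc + l)%:R * delta.
  by rewrite mulr_gt0 // ltr0n addn_gt0 l_gt0 orbT.
rewrite chain_bound_cons addnA.
case: s IHs s_pos => [|l' s] IHs s_pos.
  rewrite /chain_bound /= big_ord0 big_nil !mulr1 expr0 invr1 mulr1.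
  by rewrite addn0 mulr1 mulrCA mulfV ?lt0r_neq0 // mulr1.
apply: le_trans (norm_inf_mulmx _ _) _.
rewrite mulrCA; apply: ler_pM; rewrite ?norm_inf_ge0 ?IHs //.
apply: le_trans (norm_inf_mulmx _ _) _.
rewrite ler_pM ?norm_inf_ge0 // norm_inf_resolvent //.
- exact: Dgen_offdiag_ge0.
- by move=> i; rewrite Dgen_rowsum.
Qed.

End Chain.

Lemma mem_comps_aux f n s : s \in comps_aux f n ->
  sumn s = n /\ all (fun l => 0 < l)%N s.
Proof.
elim: f n s => [|f IHf] n s /=.
  by case: eqP => [->|_]; rewrite ?inE ?in_nil // => /eqP ->.
case: eqP => [->|_]; first by rewrite inE => /eqP ->.
move=> /flattenP[_ /mapP[l l_in ->] /mapP[s' /IHf[sum_s' s'_pos] ->]].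
move: l_in; rewrite mem_iota => /andP[l_gt0 l_le]; rewrite /= l_gt0 s'_pos sum_s'.
by rewrite subnKC // -ltnS -add1n.
Qed.

Theorem mainTheorem6 (R : realType) (N : nat) (delta : R)
  (a : 'I_N -> 'I_N -> R) (b : nat -> 'I_N -> 'I_N -> R) (pi : 'rV[R]_N)
  (HN : (0 < N)%N) (Hdelta : 0 < delta)
  (Ha : forall i j : 'I_N, i != j -> 0 <= a i j)
  (Hb : forall (r : nat) (i j : 'I_N), (0 < r)%N -> 0 <= b r i j)
  (Hmom : forall (p : nat) (i j : 'I_N),
     cvgn (fun n => \sum_(1 <= r < n) (r%:R ^+ p * b r i j)))
  (Hirr : irreducible_gen (Dgen a b))
  (Hpi : invariant_dist (Dgen a b) pi)
  (m : nat) (Hm : (1 <= m)%N) :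
  Bmoment a b delta pi m <=
  \sum_(s <- compositions m)
     (\prod_(l <- s) norm_inf (Cmat b l)) /
     (delta ^+ size s * \prod_(j < size s) (sumn (take j.+1 s))%:R).
Proof.
have b_summable i j : cvgn (fun n => \sum_(1 <= r < n) b r i j).
  have -> : (fun n => \sum_(1 <= r < n) b r i j) =
            (fun n => \sum_(1 <= r < n) (r%:R ^+ 0 * b r i j)).
    by apply/funext => n; under [RHS]eq_bigr do rewrite expr0 mul1r.
  exact: Hmom.
have [pi_ge0 [pi_sum1 _]] := Hpi.
rewrite /Bmoment !big_seq; apply: ler_sum => s /mem_comps_aux[sum_s s_pos].
have s_neq0 : s != [::] by apply: contraTneq Hm => s0; rewrite -sum_s s0.
have m_delta_gt0 : 0 < m%:R * delta by rewrite mulr_gt0 // ltr0n.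
rewrite -ler_pdivlMl ?invr_gt0 // invrK.
apply: le_trans (prob_mulmx_ones_le_norm_inf _ pi_ge0 pi_sum1) _.
by rewrite -sum_s; exact: (norm_inf_chain Hdelta Ha Hb b_summable 0 s_pos s_neq0).
Qed.
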